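(* Let $d_1,d_2\in\mathbb{N}_+$ and $\boldsymbol\Theta\in[-1,1]^{d_1\times d_2}$. (a) $\max_{\pi\in[-1,1]}\mathrm{srank}(\boldsymbol\Theta-\pi)\le\mathrm{rank}(\boldsymbol\Theta)+1$. (b) If $\boldsymbol\Theta\in\mathcal{M}_{\mathrm{sgn}}(r)$, then $g(\boldsymbol\Theta)/\|g(\boldsymbol\Theta)\|_{\max}\in\mathcal{M}_{\mathrm{sgn}}(r+1)$ for every strictly monotonic function $g:\mathbb{R}\to\mathbb{R}$, where $g(\boldsymbol\Theta)$ denotes entrywise application of $g$. (c) For every dimension $d$, there exists a $d\times d$ matrix $\boldsymbol\Theta\in\mathcal{M}_{\mathrm{sgn}}(2)$ with $\mathrm{rank}(\boldsymbol\Theta)=d$.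
   Context: Sign convention: $\mathrm{sgn}(x)=1$ if $x>0$ and $-1$ otherwise, applied entrywise to matrices; $\boldsymbol\Theta-\pi$ subtracts $\pi$ from every entry. Sign rank: $\mathrm{srank}(\boldsymbol\Theta)=\min\{\mathrm{rank}(\boldsymbol\Theta'):\mathrm{sgn}(\boldsymbol\Theta')=\mathrm{sgn}(\boldsymbol\Theta)\}$. $\|\boldsymbol\Theta\|_{\max}=\max_{i,j}|\Theta_{ij}|$. For $r\in\mathbb{N}_+$, $\mathcal{M}_{\mathrm{sgn}}(r)=\{\boldsymbol\Theta:\max_{\pi\in[-1,1]}\mathrm{srank}(\boldsymbol\Theta-\pi)\le r,\ \|\boldsymbol\Theta\|_{\max}\le1\}$. *)

From HB Require Import structures.
From mathcomp Require Import all_boot all_order all_algebra.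
From mathcomp Require Import boolp reals.
Set Implicit Arguments. Unset Strict Implicit. Unset Printing Implicit Defensive.
Import Order.TTheory GRing.Theory Num.Theory.
Local Open Scope ring_scope.

Section SignRank.
Variable R : realType.

Definition sgn (x : R) : R := if 0 < x then 1 else -1.

Definition sgnmx m n (A : 'M[R]_(m, n)) : 'M[R]_(m, n) := map_mx sgn A.

Definition srank_pred m n (A : 'M[R]_(m, n)) : pred nat :=
  fun k => `[< exists B : 'M[R]_(m, n), sgnmx B = sgnmx A /\ \rank B = k >].

Lemma srank_ex m n (A : 'M[R]_(m, n)) : exists k, srank_pred A k.
Proof. by exists (\rank A); apply/asboolP; exists A. Qed.

Definition srank m n (A : 'M[R]_(m, n)) : nat := ex_minn (srank_ex A).

Definition mxmaxnorm m n (A : 'M[R]_(m, n)) : R :=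
  \big[Num.max/0]_(i < m) \big[Num.max/0]_(j < n) `|A i j|.

Definition mxsubc m n (A : 'M[R]_(m, n)) (pi : R) : 'M[R]_(m, n) :=
  A - const_mx pi.

Definition max_srank_le m n (A : 'M[R]_(m, n)) (r : nat) : Prop :=
  forall pi : R, -1 <= pi <= 1 -> (srank (mxsubc A pi) <= r)%N.

Definition M_sgn m n (r : nat) (A : 'M[R]_(m, n)) : Prop :=
  max_srank_le A r /\ mxmaxnorm A <= 1.

Definition strictly_monotonic (g : R -> R) : Prop :=
  (forall x y, x < y -> g x < g y) \/ (forall x y, x < y -> g y < g x).

End SignRank.

From HB Require Import structures.
From mathcomp Require Import all_boot all_order all_algebra.
From mathcomp Require Import boolp reals lra.
Import Order.TTheory GRing.Theory Num.Theory.
Set Implicit Arguments. Unset Strict Implicit. Unset Printing Implicit Defensive.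
Local Open Scope ring_scope.

(* (a) Theta - pi is Theta plus a rank-one matrix.
   (b) Put f x := g x / c with c := ||g(Theta)||_max, so that the positive
   entries of g(Theta)/c - pi are those where pi < f (Theta_ij).  For g
   increasing this is an up-set of values, and on the finitely many entries
   of Theta an up-set is either everything or {x | p < x} for the largest
   entry p outside it; as |p| <= 1 the pattern is that of Theta - p, of sign
   rank at most r.  For g decreasing the pattern is the complement of such
   a pattern, and complementing the sign pattern of B costs at most one rank:
   b - B has the complementary pattern when b is the least positive entry
   of B.
   (c) The lower triangular all-ones matrix L has full rank, while L - pi has
   the sign pattern of (i - j + e)_ij for a suitable e, a sum of two rank-one
   matrices. *)

Section SignRankTheory.
Variable R : realType.

Lemma sgnmxE m n (A B : 'M[R]_(m, n)) :
  sgnmx A = sgnmx B <-> forall i j, (0 < A i j) = (0 < B i j).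
Proof.
split=> [/matrixP eqAB i j | eqAB]; last first.
  by apply/matrixP=> i j; rewrite !mxE /sgn eqAB.
by move: (eqAB i j); rewrite !mxE /sgn; do 2 case: ifP => _ //; lra.
Qed.

Lemma srank_le_rank m n (A B : 'M[R]_(m, n)) :
  (forall i j, (0 < B i j) = (0 < A i j)) -> (srank A <= \rank B)%N.
Proof.
move=> /sgnmxE eqBA; rewrite /srank; case: ex_minnP => k _; apply.
by apply/asboolP; exists B.
Qed.

Lemma srank_witness m n (A : 'M[R]_(m, n)) :
  exists2 B : 'M[R]_(m, n),
    forall i j, (0 < B i j) = (0 < A i j) & \rank B = srank A.
Proof.
rewrite /srank; case: ex_minnP => k /asboolP[B [/sgnmxE eqBA rkB]] _.
by exists B.
Qed.

Lemma eq_srank m n (A B : 'M[R]_(m, n)) :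
  (forall i j, (0 < A i j) = (0 < B i j)) -> srank A = srank B.
Proof.
move=> eqAB; apply/anti_leq/andP; split.
  have [B' eqB'B <-] := srank_witness B.
  by apply: srank_le_rank => i j; rewrite eqB'B eqAB.
have [A' eqA'A <-] := srank_witness A.
by apply: srank_le_rank => i j; rewrite eqA'A eqAB.
Qed.

Lemma mxrank_outer_prod m n (u : 'I_m -> R) (v : 'I_n -> R) :
  (\rank (\matrix_(i, j) (u i * v j)%R) <= 1)%N.
Proof.
have -> : \matrix_(i, j) (u i * v j) = (\col_i u i) *m (\row_j v j).
  by apply/matrixP=> i j; rewrite !mxE big_ord1 !mxE.
exact: mulmx_max_rank.
Qed.

Lemma mxrank_outer_sum m n (u : 'I_m -> R) (v : 'I_n -> R) :
  (\rank (\matrix_(i, j) (u i + v j)%R) <= 2)%N.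
Proof.
have -> : \matrix_(i, j) (u i + v j) =
          \matrix_(i, j) (u i * 1) + \matrix_(i, j) (1 * v j).
  by apply/matrixP=> i j; rewrite !mxE mulr1 mul1r.
apply: leq_trans (mxrank_add _ _) _.
by rewrite (leq_add (mxrank_outer_prod _ _) (mxrank_outer_prod _ _)).
Qed.

Lemma mxrank_const m n (a : R) : (\rank (const_mx a : 'M[R]_(m, n)) <= 1)%N.
Proof.
have -> : const_mx a = \matrix_(i < m, j < n) (a * 1).
  by apply/matrixP=> i j; rewrite !mxE mulr1.
exact: mxrank_outer_prod.
Qed.

Lemma mxrank_subc m n (A : 'M[R]_(m, n)) pi :
  (\rank (mxsubc A pi) <= (\rank A).+1)%N.
Proof.
apply: leq_trans (mxrank_add _ _) _.
by rewrite mxrank_opp -addn1 leq_add2l mxrank_const.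
Qed.

Lemma max_srank_le_rankS m n (A : 'M[R]_(m, n)) : max_srank_le A (\rank A).+1.
Proof. by move=> pi _; apply: leq_trans (srank_le_rank _) (mxrank_subc _ _). Qed.

Lemma srank_le1_const m n (A : 'M[R]_(m, n)) (b : bool) :
  (forall i j, (0 < A i j) = b) -> (srank A <= 1)%N.
Proof.
move=> Ab; apply: leq_trans (mxrank_const _ _ (if b then 1 else -1)).
apply: srank_le_rank => i j; rewrite Ab mxE.
by case: {Ab} b; rewrite ?ltr01 // oppr_gt0 ltr10.
Qed.

Lemma mxmaxnorm_leP m n (A : 'M[R]_(m, n)) c :
  reflect (0 <= c /\ forall i j, `|A i j| <= c) (mxmaxnorm A <= c).
Proof.
apply: (iffP (bigmax_leP _ _ _ _)) => [[c_ge0 rowA] | [c_ge0 leAc]].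
  by split=> // i j; have /bigmax_leP[_ ->] := rowA i isT.
by split=> // i _; apply/bigmax_leP; split=> // j _; apply: leAc.
Qed.

Lemma mxmaxnorm_ge0 m n (A : 'M[R]_(m, n)) : 0 <= mxmaxnorm A.
Proof. by have /mxmaxnorm_leP[] := lexx (mxmaxnorm A). Qed.

Lemma normr_le_mxmaxnorm m n (A : 'M[R]_(m, n)) i j : `|A i j| <= mxmaxnorm A.
Proof. by have /mxmaxnorm_leP[_] := lexx (mxmaxnorm A); apply. Qed.

Lemma mxmaxnorm_scale_inv m n (A : 'M[R]_(m, n)) :
  mxmaxnorm ((mxmaxnorm A)^-1 *: A) <= 1.
Proof.
apply/mxmaxnorm_leP; split=> // i j; rewrite mxE normrM normfV.
rewrite (ger0_norm (mxmaxnorm_ge0 A)).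
have [->|nz] := eqVneq (mxmaxnorm A) 0; first by rewrite invr0 mul0r.
by rewrite ler_pdivrMl ?mulr1 ?normr_le_mxmaxnorm // lt_def nz mxmaxnorm_ge0.
Qed.

Definition upward_closed (Q : pred R) := forall x y, x <= y -> Q x -> Q y.

Lemma upward_threshold m n (T : 'M[R]_(m, n)) (Q : pred R) :
  upward_closed Q ->
  (forall i j, Q (T i j)) \/
  exists i0 j0, forall i j, Q (T i j) = (T i0 j0 < T i j).
Proof.
move=> upQ; case: (pickP (fun k : 'I_m * 'I_n => ~~ Q (T k.1 k.2))) => [k0 nQk0|allQ].
  right; case: (@arg_maxP _ _ _ k0 (fun k => ~~ Q (T k.1 k.2)) (fun k => T k.1 k.2) nQk0).
  move=> [i0 j0] /= nQ0 maxT; exists i0, j0 => i j; apply/idP/idP => [Qij|lt0ij].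
    by rewrite ltNge; apply: contra nQ0 => le_ij0; apply: upQ le_ij0 Qij.
  by apply: contraLR lt0ij => nQij; rewrite -leNgt (maxT (i, j)).
by left=> i j; apply/negbFE/(allQ (i, j)).
Qed.

Lemma srank_compl m n (A B : 'M[R]_(m, n)) :
  (forall i j, (0 < A i j) = ~~ (0 < B i j)) -> (srank A <= (srank B).+1)%N.
Proof.
move=> AB; have [B0 eqB0B <-] := srank_witness B.
have up_ge0 : upward_closed (fun x => 0 <= x) by move=> x y /[swap]; apply: le_trans.
case: (upward_threshold (- B0) up_ge0) => [B0_le0 | [i0 [j0 thr]]].
  apply: (@leq_trans 1) => //; apply: (@srank_le1_const _ _ _ true) => i j.
  by rewrite AB -eqB0B -leNgt; have := B0_le0 i j; rewrite mxE oppr_ge0.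
(* B0 i0 j0 is the least positive entry of B0 *)
apply: leq_trans (srank_le_rank (B := - mxsubc B0 (B0 i0 j0)) _) _.
  move=> i j; rewrite AB -eqB0B -leNgt !mxE oppr_gt0 subr_lt0 -oppr_ge0.
  by have := thr i j; rewrite !mxE ltrN2.
by rewrite mxrank_opp mxrank_subc.
Qed.

Lemma entry_in_unit_interval m n (T : 'M[R]_(m, n)) i j :
  mxmaxnorm T <= 1 -> -1 <= T i j <= 1.
Proof. by move=> T1; rewrite -ler_norml (le_trans (normr_le_mxmaxnorm _ _ _)). Qed.

Section MonotonePattern.
Variables (m n r : nat) (T A : 'M[R]_(m, n)) (Q : pred R).
Hypotheses (T1 : mxmaxnorm T <= 1) (Tr : max_srank_le T r).
Hypothesis AQ : forall i j, (0 < A i j) = Q (T i j).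

Lemma srank_upward_pattern : (0 < r)%N -> upward_closed Q -> (srank A <= r)%N.
Proof.
move=> r_gt0 upQ; case: (upward_threshold T upQ) => [allQ | [i0 [j0 thr]]].
  apply: (leq_trans _ r_gt0); apply: (@srank_le1_const _ _ _ true) => i j.
  by rewrite AQ allQ.
rewrite (@eq_srank _ _ A (mxsubc T (T i0 j0))) ?Tr ?entry_in_unit_interval //.
by move=> i j; rewrite AQ thr !mxE subr_gt0.
Qed.

Lemma srank_downward_pattern : upward_closed (predC Q) -> (srank A <= r.+1)%N.
Proof.
move=> upCQ; case: (upward_threshold T upCQ) => [allCQ | [i0 [j0 thr]]].
  apply: (@leq_trans 1) => //; apply: (@srank_le1_const _ _ _ false) => i j.
  by rewrite AQ; apply/negbTE/allCQ.
apply: leq_trans (srank_compl (B := mxsubc T (T i0 j0)) _) _.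
  by move=> i j; rewrite AQ !mxE subr_gt0 -thr negbK.
by rewrite ltnS Tr ?entry_in_unit_interval.
Qed.

End MonotonePattern.

Lemma M_sgn_normalized_comp m n r (T : 'M[R]_(m, n)) (g : R -> R) :
  (0 < r)%N -> M_sgn r T -> strictly_monotonic g ->
  M_sgn r.+1 ((mxmaxnorm (map_mx g T))^-1 *: map_mx g T).
Proof.
move=> r_gt0 [Tr T1] g_mono; split; last exact: mxmaxnorm_scale_inv.
move=> pi _; set c := mxmaxnorm _.
have c_ge0 : 0 <= c^-1 by rewrite invr_ge0 mxmaxnorm_ge0.
pose Q x := pi < c^-1 * g x.
have AQ i j : (0 < mxsubc (c^-1 *: map_mx g T) pi i j) = Q (T i j).
  by rewrite !mxE subr_gt0.
case: g_mono => [g_incr | g_decr].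
  apply/leqW/(srank_upward_pattern T1 Tr AQ r_gt0) => x y le_xy.
  by move=> /lt_le_trans; apply; rewrite ler_wpM2l // (ltW_homo g_incr).
apply: (srank_downward_pattern T1 Tr AQ) => x y le_xy; apply: contra.
have g_nincr := ltW_nhomo (fun y x => g_decr x y).
by move=> /lt_le_trans; apply; rewrite ler_wpM2l // g_nincr.
Qed.

Definition lower_ones d : 'M[R]_d := \matrix_(i, j) (if (j <= i)%N then 1 else 0).

Lemma mxrank_lower_ones d : \rank (lower_ones d) = d.
Proof.
apply: mxrank_unit; rewrite unitmxE det_trig.
  by rewrite big1 ?unitr1 // => i _; rewrite mxE leqnn.
by apply/is_trig_mxP => i j lt_ij; rewrite mxE leqNgt lt_ij.
Qed.

Lemma mxmaxnorm_lower_ones d : mxmaxnorm (lower_ones d) <= 1.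
Proof.
apply/mxmaxnorm_leP; split=> // i j.
by rewrite mxE; case: ifP; rewrite ?normr1 ?normr0.
Qed.

Lemma srank_lower_ones_subc d pi : (srank (mxsubc (lower_ones d) pi) <= 2)%N.
Proof.
(* i - j + e is then positive everywhere, exactly when j <= i, or nowhere,
   according as L - pi is. *)
pose e : R := if pi < 0 then d%:R else if pi < 1 then 2^-1 else - d%:R.
apply: leq_trans (mxrank_outer_sum (fun i : 'I_d => (val i)%:R)
                                   (fun j : 'I_d => e - (val j)%:R)).
apply: srank_le_rank => i j; rewrite !mxE /e.
have i_lt : (val i)%:R < d%:R :> R by rewrite ltr_nat ltn_ord.
have j_lt : (val j)%:R < d%:R :> R by rewrite ltr_nat ltn_ord.
have i_ge0 : 0 <= (val i)%:R :> R by [].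
have j_ge0 : 0 <= (val j)%:R :> R by [].
case: leqP => ij; [have : (val j)%:R <= (val i)%:R :> R by rewrite ler_nat
                  | have : (val i)%:R + 1 <= (val j)%:R :> R by rewrite natr1 ler_nat].
all: by case: (ltP pi 0) => ?; [|case: (ltP pi 1) => ?]; move=> ?; apply/idP/idP; lra.
Qed.

Lemma M_sgn_lower_ones d : M_sgn 2 (lower_ones d).
Proof. by split; [move=> pi _; apply: srank_lower_ones_subc | apply: mxmaxnorm_lower_ones]. Qed.

End SignRankTheory.

Theorem proposition2 (R : realType) :
  (* (a) *)
  (forall (d1 d2 : nat) (Theta : 'M[R]_(d1, d2)),
      (0 < d1)%N -> (0 < d2)%N -> mxmaxnorm Theta <= 1 ->
      max_srank_le Theta (\rank Theta).+1)
  /\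
  (* (b) *)
  (forall (d1 d2 r : nat) (Theta : 'M[R]_(d1, d2)),
      (0 < d1)%N -> (0 < d2)%N -> (0 < r)%N -> mxmaxnorm Theta <= 1 ->
      M_sgn r Theta ->
      forall g : R -> R, strictly_monotonic g ->
        M_sgn r.+1 ((mxmaxnorm (map_mx g Theta))^-1 *: map_mx g Theta))
  /\
  (* (c) *)
  (forall d : nat, exists Theta : 'M[R]_d, M_sgn 2 Theta /\ \rank Theta = d).
Proof.
split; first by move=> d1 d2 Theta _ _ _; apply: max_srank_le_rankS.
split.
  by move=> d1 d2 r Theta _ _ r_gt0 _ Theta_r g; apply: M_sgn_normalized_comp.
move=> d; exists (lower_ones R d).
by split; [apply: M_sgn_lower_ones | apply: mxrank_lower_ones].
Qed.
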